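(* In the Poisson matching problem $PM(\lambda,\mu)$ (defined in the context), for every blue point $b\in\mathcal{B}$, $$\mathcal{P}(b)=\{r\in\mathcal{R}:g(b,r)=0\}.$$ Moreover, for any $b_1,b_2\in\mathcal{B}$, $\mathcal{P}(b_1)\cap\mathcal{P}(b_2)\ne\emptyset$ implies $\mathcal{P}(b_1)=\mathcal{P}(b_2)$ and $g(b_1,b_2)=1$.
   Context: Poisson matching problem $PM(\lambda,\mu)$, $0<\lambda\le\mu$: $\mathcal{B}$ (blue points) and $\mathcal{R}$ (red points) are independent homogeneous Poisson point processes on $\mathbb{R}$ of intensities $\lambda$ and $\mu$ respectively; $\mathcal{S}=\mathcal{B}\cup\mathcal{R}$. A matching is a map $\mathcal{M}:\mathcal{S}\to\mathcal{S}\cup\{\infty\}$ with $\mathcal{M}(r)\in\mathcal{B}\cup\{\infty\}$ for red $r$, $\mathcal{M}(b)\in\mathcal{R}\cup\{\infty\}$ for blue $b$, and $\mathcal{M}(r)=b$ iff $\mathcal{M}(b)=r$. The matching segment $I_\mathcal{M}(x)$ is the open interval with endpoints $x$ and $\mathcal{M}(x)$ ($(x,\infty)$ if unmatched). $\mathcal{M}$ is nested if for all $x,y\in\mathcal{S}$, $x\in I_\mathcal{M}(y)$ implies $\mathcal{M}(x)$ lies in the closure of $I_\mathcal{M}(y)$. For $b\in\mathcal{B}$, $\mathcal{P}(b)=\{r\in\mathcal{R}:\exists\text{ nested }\mathcal{M}\text{ with }\mathcal{M}(b)=r\}$. For $x<y$, $g(x,y)$ is the number of red points in the open interval $(x,y)$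 minus the number of blue points in $(x,y)$; for $x>y$, $g(x,y)=g(y,x)$. *)

From Stdlib Require Import Reals Lra ZArith List.
Open Scope R_scope.

(* A point configuration on the real line is a predicate P : R -> Prop. *)

Definition count_in (P : R -> Prop) (a c : R) (n : nat) : Prop :=
  exists l : list R, NoDup l /\ length l = n /\
    forall x, In x l <-> (P x /\ a < x < c).

Definition locally_finite (P : R -> Prop) : Prop :=
  forall a c, exists n, count_in P a c n.

(* [g_val Bl Rd x y z] : g(x,y) = z, i.e. (#red - #blue) in the open interval
   between x and y (symmetric in x,y).  Under local finiteness z is unique. *)
Definition g_val (Bl Rd : R -> Prop) (x y : R) (z : Z) : Prop :=
  exists nr nb, count_in Rd (Rmin x y) (Rmax x y) nr /\
                count_in Bl (Rmin x y) (Rmax x y) nb /\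
                z = (Z.of_nat nr - Z.of_nat nb)%Z.

(* A matching: M x = Some y (matched to y) or None (matched to infinity). *)
Definition is_matching (Bl Rd : R -> Prop) (M : R -> option R) : Prop :=
  (forall r, Rd r -> M r = None \/ exists b, M r = Some b /\ Bl b) /\
  (forall b, Bl b -> M b = None \/ exists r, M b = Some r /\ Rd r) /\
  (forall r b, Rd r -> Bl b -> (M r = Some b <-> M b = Some r)).

Definition in_seg (M : R -> option R) (x z : R) : Prop :=
  match M x with
  | Some y => Rmin x y < z < Rmax x y
  | None => x < z
  end.

(* w (a point of R or infinity = None) lies in the closure of I_M(y),
   closure taken in R ∪ {∞}: closure of (y,∞) is [y,∞]. *)
Definition in_cl_seg (M : R -> option R) (y : R) (w : option R) : Prop :=
  match M y, w with
  | Some y', Some z => Rmin y y' <= z <= Rmax y y'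
  | Some _, None => False
  | None, Some z => y <= z
  | None, None => True
  end.

Definition nested (Bl Rd : R -> Prop) (M : R -> option R) : Prop :=
  forall x y, (Bl x \/ Rd x) -> (Bl y \/ Rd y) ->
    in_seg M y x -> in_cl_seg M y (M x).

Definition Pset (Bl Rd : R -> Prop) (b r : R) : Prop :=
  Rd r /\ exists M, is_matching Bl Rd M /\ nested Bl Rd M /\ M b = Some r.

From Stdlib Require Import Reals ZArith Lra Lia List ClassicalEpsilon Classical.
Open Scope R_scope.

(* In a nested matching the points strictly inside a matched segment are
   matched among themselves, so a matched pair b, r encloses as many red as
   blue points: g(b,r) = 0.  Conversely, if g(b,r) = 0, the closed segment
   contains a red and a blue point with no point strictly between them (b and r
   themselves when the segment is empty); match them together, remove them,
   and conclude by induction on the number of points inside.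
   For the second statement, compare everything with the height
   h(t) = #red(a,t) - #blue(a,t) seen from a base point a on the left:
   g(b,r) = 0 iff h(r) = h(b) - 1, so P(b) is the set of red points at height
   h(b) - 1; two blue points sharing a red partner thus have the same height,
   which for blue points means g(b1,b2) = 1. *)

Ltac rminmax := unfold Rmin, Rmax in *; repeat match goal with
  | |- context [Rle_dec ?a ?b] => destruct (Rle_dec a b)
  | H : context [Rle_dec ?a ?b] |- _ => destruct (Rle_dec a b) end; lra.

Definition without (P : R -> Prop) (x z : R) : Prop := P z /\ z <> x.

Lemma count_in_unique P a c n m : count_in P a c n -> count_in P a c m -> n = m.
Proof.
  intros [l1 [N1 [<- H1]]] [l2 [N2 [<- H2]]].
  apply Nat.le_antisymm; apply NoDup_incl_length; auto; intros z Hz.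
  - apply H2, H1, Hz.
  - apply H1, H2, Hz.
Qed.

Lemma count_in_0 P a c z : count_in P a c 0 -> P z -> a < z < c -> False.
Proof.
  intros [[|w l] [_ [L H]]] Pz Iz; [|discriminate].
  exact (proj2 (H z) (conj Pz Iz)).
Qed.

Lemma count_in_S P a c n : count_in P a c (S n) -> exists z, P z /\ a < z < c.
Proof.
  intros [[|w l] [_ [L H]]]; [discriminate|].
  exists w. apply H. left. reflexivity.
Qed.

Lemma count_in_without P a c n x : count_in P a c n ->
  exists m, count_in (without P x) a c m /\ (P x -> a < x < c -> n = S m).
Proof.
  intros [l [N [L H]]]. unfold without.
  destruct (in_dec Req_EM_T x l) as [I|I].
  - destruct (in_split _ _ I) as [l1 [l2 ->]].
    exists (length (l1 ++ l2)). split.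
    + exists (l1 ++ l2). split; [eapply NoDup_remove_1; eauto|split; [reflexivity|]].
      intros z. rewrite in_app_iff. split.
      * intros Hz. assert (z <> x) by (intros ->; apply (NoDup_remove_2 _ _ _ N), in_app_iff, Hz).
        assert (Hz' : In z (l1 ++ x :: l2)) by (rewrite in_app_iff; simpl; tauto).
        apply H in Hz'. tauto.
      * intros [[Pz nz] Iz]. assert (Hz : In z (l1 ++ x :: l2)) by (apply H; auto).
        rewrite in_app_iff in Hz. simpl in Hz. destruct Hz as [?|[?|?]]; auto. congruence.
    + intros _ _. subst n. rewrite !length_app. simpl. lia.
  - exists n. split.
    + exists l. split; [assumption|split; [assumption|]].
      intros z. rewrite H. split; [|tauto].
      intros [Pz Iz]. split; [split; [assumption|]|assumption]. intros ->. apply I, H. auto.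
    + intros Px Ix. exfalso. apply I, H. auto.
Qed.

Lemma locally_finite_without P x : locally_finite P -> locally_finite (without P x).
Proof.
  intros H a c. destruct (H a c) as [n Hn].
  destruct (count_in_without P a c n x Hn) as [m [Hm _]]. eauto.
Qed.

Lemma count_in_le_of_inj (A C : R -> Prop) (f : R -> R) a c a' c' n m :
  count_in A a c n -> count_in C a' c' m ->
  (forall x, A x -> a < x < c -> C (f x) /\ a' < f x < c') ->
  (forall x1 x2, A x1 -> a < x1 < c -> A x2 -> a < x2 < c -> f x1 = f x2 -> x1 = x2) ->
  (n <= m)%nat.
Proof.
  intros [l [Nl [<- Hl]]] [l' [Nl' [<- Hl']]] Hmap Hinj.
  rewrite <- (length_map f l). apply NoDup_incl_length.
  - apply NoDup_map_NoDup_ForallPairs; [|exact Nl].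
    intros x1 x2 I1 I2. apply Hl in I1, I2. apply Hinj; tauto.
  - intros w Hw. apply in_map_iff in Hw. destruct Hw as [x [<- Ix]].
    apply Hl in Ix. apply Hl', Hmap; tauto.
Qed.

Lemma count_in_split P a y c n1 n2 : a < y < c ->
  count_in P a y n1 -> count_in P y c n2 ->
  (P y -> count_in P a c (n1 + 1 + n2)) /\ (~ P y -> count_in P a c (n1 + n2)).
Proof.
  intros Hy [l1 [N1 [<- H1]]] [l2 [N2 [<- H2]]]. split; intros Py.
  - exists (l1 ++ y :: l2). split; [|split].
    + apply NoDup_app; auto.
      * constructor; auto. intro I. apply H2 in I. lra.
      * intros z I1 [<-|I2]; apply H1 in I1; [lra|]. apply H2 in I2. lra.
    + rewrite length_app. simpl. lia.
    + intros z. rewrite in_app_iff. simpl. rewrite H1, H2. split.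
      * intros [?|[<-|?]]; split; try tauto; lra.
      * intros [Pz Iz]. destruct (Rtotal_order z y) as [h|[h|h]].
        -- left. split; [assumption|lra].
        -- right. left. auto.
        -- right. right. split; [assumption|lra].
  - exists (l1 ++ l2). split; [|split].
    + apply NoDup_app; auto.
      intros z I1 I2. apply H1 in I1. apply H2 in I2. lra.
    + apply length_app.
    + intros z. rewrite in_app_iff, H1, H2. split.
      * intros [?|?]; split; try tauto; lra.
      * intros [Pz Iz]. destruct (Rtotal_order z y) as [h|[->|h]].
        -- left. split; [assumption|lra].
        -- contradiction.
        -- right. split; [assumption|lra].
Qed.

(* Meaningful only when P has finitely many points in (a,c). *)
Definition cnt (P : R -> Prop) (a c : R) : nat :=
  epsilon (inhabits 0%nat) (count_in P a c).

Lemma cnt_eq P a c n : count_in P a c n -> cnt P a c = n.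
Proof.
  intros H. apply (count_in_unique P a c); [|exact H].
  unfold cnt. apply epsilon_spec. exists n. exact H.
Qed.

Lemma cnt_spec P a c : locally_finite P -> count_in P a c (cnt P a c).
Proof. intros H. unfold cnt. apply epsilon_spec, H. Qed.

Lemma cnt_split P a y c : locally_finite P -> a < y < c ->
  (P y -> cnt P a c = (cnt P a y + 1 + cnt P y c)%nat) /\
  (~ P y -> cnt P a c = (cnt P a y + cnt P y c)%nat).
Proof.
  intros H Hy.
  destruct (count_in_split P a y c _ _ Hy (cnt_spec P a y H) (cnt_spec P y c H)) as [H1 H2].
  split; intros; apply cnt_eq; auto.
Qed.

Lemma cnt_le_subinterval P a c a' c' : locally_finite P -> a <= a' -> c' <= c ->
  (cnt P a' c' <= cnt P a c)%nat.
Proof.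
  intros H ha hc.
  apply (count_in_le_of_inj P P (fun x => x) a' c' a c); try apply cnt_spec; auto.
  intros x Px Ix. split; [assumption|lra].
Qed.

Lemma cnt_lt_subinterval P a c a' c' z : locally_finite P -> a <= a' -> c' <= c ->
  P z -> a < z < c -> ~ (a' < z < c') -> (cnt P a' c' < cnt P a c)%nat.
Proof.
  intros H ha hc Pz Iz Nz.
  destruct (count_in_without P a c _ z (cnt_spec P a c H)) as [m [Hm E]].
  rewrite (E Pz Iz). apply Nat.lt_succ_r.
  apply (count_in_le_of_inj P (without P z) (fun x => x) a' c' a c); auto.
  - apply cnt_spec, H.
  - intros x Px Ix. split; [split; [assumption|]|lra]. intros ->. contradiction.
Qed.

Definition gfun (Bl Rd : R -> Prop) (x y : R) : Z :=
  (Z.of_nat (cnt Rd (Rmin x y) (Rmax x y)) - Z.of_nat (cnt Bl (Rmin x y) (Rmax x y)))%Z.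

Lemma g_val_iff Bl Rd x y z : locally_finite Bl -> locally_finite Rd ->
  g_val Bl Rd x y z <-> z = gfun Bl Rd x y.
Proof.
  intros hB hR. unfold gfun. split.
  - intros [nr [nb [Cr [Cb ->]]]]. rewrite (cnt_eq _ _ _ _ Cr), (cnt_eq _ _ _ _ Cb).
    reflexivity.
  - intros ->. exists (cnt Rd (Rmin x y) (Rmax x y)), (cnt Bl (Rmin x y) (Rmax x y)).
    split; [apply cnt_spec, hR|split; [apply cnt_spec, hB|reflexivity]].
Qed.

Lemma gfun_sym Bl Rd x y : gfun Bl Rd x y = gfun Bl Rd y x.
Proof. unfold gfun. rewrite Rmin_comm, Rmax_comm. reflexivity. Qed.

Definition height (Bl Rd : R -> Prop) (a t : R) : Z :=
  (Z.of_nat (cnt Rd a t) - Z.of_nat (cnt Bl a t))%Z.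

Section Height.

Variables (Bl Rd : R -> Prop).
Hypotheses (hB : locally_finite Bl) (hR : locally_finite Rd)
  (hdisj : forall x, Bl x -> Rd x -> False).

Lemma height_step_red a x y : a < x < y -> Rd x ->
  height Bl Rd a y = (height Bl Rd a x + 1 + gfun Bl Rd x y)%Z.
Proof.
  intros Hx Rx. unfold height, gfun. rewrite Rmin_left, Rmax_right by lra.
  rewrite (proj1 (cnt_split Rd a x y hR Hx) Rx).
  rewrite (proj2 (cnt_split Bl a x y hB Hx) (fun Bx => hdisj x Bx Rx)).
  lia.
Qed.

Lemma height_step_blue a x y : a < x < y -> Bl x ->
  height Bl Rd a y = (height Bl Rd a x - 1 + gfun Bl Rd x y)%Z.
Proof.
  intros Hx Bx. unfold height, gfun. rewrite Rmin_left, Rmax_right by lra.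
  rewrite (proj2 (cnt_split Rd a x y hR Hx) (hdisj x Bx)).
  rewrite (proj1 (cnt_split Bl a x y hB Hx) Bx).
  lia.
Qed.

Lemma gfun_blue_red_zero a b r : a < b -> a < r -> Bl b -> Rd r ->
  gfun Bl Rd b r = 0%Z <-> height Bl Rd a r = (height Bl Rd a b - 1)%Z.
Proof.
  intros hb hr Bb Rr.
  destruct (Rtotal_order b r) as [h|[<-|h]].
  - rewrite (height_step_blue a b r (conj hb h) Bb). lia.
  - exfalso. exact (hdisj b Bb Rr).
  - rewrite gfun_sym, (height_step_red a r b (conj hr h) Rr). lia.
Qed.

Lemma gfun_blue_blue_one a b1 b2 : a < b1 -> a < b2 -> Bl b1 -> Bl b2 -> b1 <> b2 ->
  height Bl Rd a b1 = height Bl Rd a b2 -> gfun Bl Rd b1 b2 = 1%Z.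
Proof.
  intros h1 h2 B1 B2 ne E.
  destruct (Rtotal_order b1 b2) as [h|[h|h]]; [|contradiction|].
  - rewrite (height_step_blue a b1 b2 (conj h1 h) B1) in E. lia.
  - rewrite gfun_sym. rewrite (height_step_blue a b2 b1 (conj h2 h) B2) in E. lia.
Qed.

End Height.

Lemma count_in_le_of_matched (A C : R -> Prop) (M : R -> option R) a c n m :
  count_in A a c n -> count_in C a c m ->
  (forall x, A x -> a < x < c -> exists y, M x = Some y /\ C y /\ a < y < c) ->
  (forall x y, A x -> M x = Some y -> M y = Some x) ->
  (n <= m)%nat.
Proof.
  intros HA HC Hmap Hsym.
  apply (count_in_le_of_inj A C (fun x => match M x with Some y => y | None => x end)
           a c a c n m HA HC).
  - intros x Ax Ix. destruct (Hmap x Ax Ix) as [y [-> Hy]]. exact Hy.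
  - intros x1 x2 A1 I1 A2 I2.
    destruct (Hmap x1 A1 I1) as [y1 [E1 _]], (Hmap x2 A2 I2) as [y2 [E2 _]].
    rewrite E1, E2. intros <-.
    pose proof (Hsym x1 y1 A1 E1). pose proof (Hsym x2 y1 A2 E2). congruence.
Qed.

Section Matching.

Variables (Bl Rd : R -> Prop) (M : R -> option R).
Hypothesis hM : is_matching Bl Rd M.

Lemma matching_red_partner r y : Rd r -> M r = Some y -> Bl y /\ M y = Some r.
Proof.
  intros Rr E. destruct hM as [hr [_ hrb]].
  destruct (hr r Rr) as [E'|[b [E' Bb]]]; rewrite E in E'; [discriminate|].
  injection E' as <-. split; [exact Bb|]. exact (proj1 (hrb r y Rr Bb) E).
Qed.

Lemma matching_blue_partner b y : Bl b -> M b = Some y -> Rd y /\ M y = Some b.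
Proof.
  intros Bb E. destruct hM as [_ [hb hrb]].
  destruct (hb b Bb) as [E'|[r [E' Rr]]]; rewrite E in E'; [discriminate|].
  injection E' as <-. split; [exact Rr|]. exact (proj2 (hrb y b Rr Bb) E).
Qed.

Lemma matching_partner x y : Bl x \/ Rd x -> M x = Some y ->
  (Bl y \/ Rd y) /\ M y = Some x.
Proof.
  intros [Bx|Rx] E.
  - destruct (matching_blue_partner x y Bx E). auto.
  - destruct (matching_red_partner x y Rx E). auto.
Qed.

Hypothesis hN : nested Bl Rd M.

Lemma nested_partner_inside x y z : Bl x \/ Rd x -> M x = Some y -> Bl z \/ Rd z ->
  Rmin x y < z < Rmax x y -> exists w, M z = Some w /\ Rmin x y < w < Rmax x y.
Proof.
  intros Sx Exy Sz Iz.
  assert (Hcl := hN z x Sz Sx). unfold in_seg, in_cl_seg in Hcl. rewrite Exy in Hcl.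
  specialize (Hcl Iz). destruct (M z) as [w|] eqn:Ezw; [|contradiction].
  exists w. split; [reflexivity|].
  assert (nwx : w <> x).
  { intros ->. assert (y = z) by (pose proof (matching_partner z x Sz Ezw); intuition congruence).
    subst. rminmax. }
  assert (nwy : w <> y).
  { intros ->. pose proof (matching_partner x y Sx Exy). pose proof (matching_partner z y Sz Ezw).
    assert (z = x) by intuition congruence.
    subst. rminmax. }
  destruct Hcl as [h1 h2].
  destruct (Rle_lt_or_eq_dec _ _ h1) as [l1|e1], (Rle_lt_or_eq_dec _ _ h2) as [l2|e2];
    [split; assumption|..]; exfalso; rminmax.
Qed.

Lemma nested_segment_balanced x y nr nb : Bl x \/ Rd x -> M x = Some y ->
  count_in Rd (Rmin x y) (Rmax x y) nr -> count_in Bl (Rmin x y) (Rmax x y) nb -> nr = nb.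
Proof.
  intros Sx Exy Cr Cb. apply Nat.le_antisymm.
  - apply (count_in_le_of_matched Rd Bl M _ _ _ _ Cr Cb).
    + intros z Rz Iz. destruct (nested_partner_inside x y z Sx Exy (or_intror Rz) Iz) as [w [E Iw]].
      exists w. split; [exact E|split; [apply (matching_red_partner z w Rz E)|exact Iw]].
    + intros z w Rz E. apply (matching_red_partner z w Rz E).
  - apply (count_in_le_of_matched Bl Rd M _ _ _ _ Cb Cr).
    + intros z Bz Iz. destruct (nested_partner_inside x y z Sx Exy (or_introl Bz) Iz) as [w [E Iw]].
      exists w. split; [exact E|split; [apply (matching_blue_partner z w Bz E)|exact Iw]].
    + intros z w Bz E. apply (matching_blue_partner z w Bz E).
Qed.

End Matching.

Definition adjacent (Bl Rd : R -> Prop) (x y : R) : Prop :=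
  forall z, Bl z \/ Rd z -> z <= Rmin x y \/ Rmax x y <= z.

Definition add_pair (M : R -> option R) (x y z : R) : option R :=
  if Req_EM_T z x then Some y else if Req_EM_T z y then Some x else M z.

Lemma add_pair_fst M x y : add_pair M x y x = Some y.
Proof. unfold add_pair. destruct (Req_EM_T x x); congruence. Qed.

Lemma add_pair_snd M x y : x <> y -> add_pair M x y y = Some x.
Proof. intros. unfold add_pair. destruct (Req_EM_T y x), (Req_EM_T y y); congruence. Qed.

Lemma add_pair_other M x y z : z <> x -> z <> y -> add_pair M x y z = M z.
Proof. intros. unfold add_pair. destruct (Req_EM_T z x), (Req_EM_T z y); congruence. Qed.

Lemma is_matching_empty Bl Rd : is_matching Bl Rd (fun _ => None).
Proof. split; [|split]; auto. intros r b _ _. split; discriminate. Qed.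

Lemma nested_empty Bl Rd : nested Bl Rd (fun _ => None).
Proof. intros x y _ _ _. exact I. Qed.

Section AddPair.

Variables (Bl Rd : R -> Prop) (M : R -> option R) (x y : R).
Hypotheses (hdisj : forall z, Bl z -> Rd z -> False) (Rx : Rd x) (By : Bl y)
  (hM : is_matching (without Bl y) (without Rd x) M).

Lemma is_matching_add_pair : is_matching Bl Rd (add_pair M x y).
Proof.
  destruct hM as [hr [hb hrb]].
  assert (nxy : x <> y) by (intros ->; eauto).
  assert (Mr : forall r, Rd r -> r <> x -> M r <> Some y).
  { intros r Rr nrx E. destruct (hr r (conj Rr nrx)) as [E'|[b [E' [_ nby]]]]; congruence. }
  assert (Mb : forall b, Bl b -> b <> y -> M b <> Some x).
  { intros b Bb nby E. destruct (hb b (conj Bb nby)) as [E'|[r [E' [_ nrx]]]]; congruence. }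
  split; [|split].
  - intros r Rr. destruct (Req_EM_T r x) as [->|nrx].
    { right. exists y. rewrite add_pair_fst. auto. }
    assert (nry : r <> y) by (intros ->; eauto).
    rewrite add_pair_other by assumption.
    destruct (hr r (conj Rr nrx)) as [E|[b [E [Bb _]]]]; [left|right; exists b]; auto.
  - intros b Bb. destruct (Req_EM_T b y) as [->|nby].
    { right. exists x. rewrite add_pair_snd by assumption. auto. }
    assert (nbx : b <> x) by (intros ->; eauto).
    rewrite add_pair_other by assumption.
    destruct (hb b (conj Bb nby)) as [E|[r [E [Rr _]]]]; [left|right; exists r]; auto.
  - intros r b Rr Bb.
    assert (nbx : b <> x) by (intros ->; eauto).
    assert (nry : r <> y) by (intros ->; eauto).
    destruct (Req_EM_T r x) as [->|nrx], (Req_EM_T b y) as [->|nby].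
    + rewrite add_pair_fst, add_pair_snd by assumption. split; reflexivity.
    + rewrite add_pair_fst, add_pair_other by assumption.
      split; intro E; [congruence|exfalso; exact (Mb b Bb nby E)].
    + rewrite add_pair_snd, add_pair_other by assumption.
      split; intro E; [exfalso; exact (Mr r Rr nrx E)|congruence].
    + rewrite !add_pair_other by assumption. apply hrb; split; assumption.
Qed.

Hypotheses (hadj : adjacent Bl Rd x y) (hN : nested (without Bl y) (without Rd x) M).

(* No old endpoint lies strictly between x and y, so an old segment containing
   one of them contains both. *)
Lemma nested_add_pair : nested Bl Rd (add_pair M x y).
Proof.
  assert (nxy : x <> y) by (intros ->; eauto).
  assert (Sw : forall v w, Bl v \/ Rd v -> v <> x -> v <> y -> M v = Some w -> Bl w \/ Rd w).
  { intros v w Sv nvx nvy E.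
    assert (Sv' : without Bl y v \/ without Rd x v) by (unfold without; tauto).
    destruct (matching_partner _ _ M hM v w Sv' E) as [[[Bw _]|[Rw _]] _]; auto. }
  intros u v Su Sv. unfold in_seg, in_cl_seg.
  destruct (Req_EM_T v x) as [->|nvx].
  { rewrite add_pair_fst. intros Iu. destruct (hadj u Su); lra. }
  destruct (Req_EM_T v y) as [->|nvy].
  { rewrite add_pair_snd by assumption. intros Iu. destruct (hadj u Su); rminmax. }
  rewrite (add_pair_other M x y v) by assumption.
  destruct (Req_EM_T u x) as [->|nux]; [|destruct (Req_EM_T u y) as [->|nuy]].
  - rewrite add_pair_fst. destruct (M v) as [w|] eqn:Ev; intros Ix.
    + destruct (hadj v Sv), (hadj w (Sw v w Sv nvx nvy Ev)); rminmax.
    + destruct (hadj v Sv); rminmax.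
  - rewrite add_pair_snd by assumption. destruct (M v) as [w|] eqn:Ev; intros Iy.
    + destruct (hadj v Sv), (hadj w (Sw v w Sv nvx nvy Ev)); rminmax.
    + destruct (hadj v Sv); rminmax.
  - rewrite (add_pair_other M x y u) by assumption.
    apply (hN u v); unfold without; tauto.
Qed.

End AddPair.

Lemma exists_adjacent_pair Bl Rd p q : locally_finite Bl -> locally_finite Rd ->
  Rd p -> Bl q -> exists x y, Rd x /\ Bl y /\
    Rmin p q <= x <= Rmax p q /\ Rmin p q <= y <= Rmax p q /\ adjacent Bl Rd x y.
Proof.
  intros hB hR.
  enough (H : forall n p q,
    (cnt Bl (Rmin p q) (Rmax p q) + cnt Rd (Rmin p q) (Rmax p q) < n)%nat ->
    Rd p -> Bl q -> exists x y, Rd x /\ Bl y /\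
      Rmin p q <= x <= Rmax p q /\ Rmin p q <= y <= Rmax p q /\ adjacent Bl Rd x y)
    by (intros Rp Bq; eapply H; [apply Nat.lt_succ_diag_r|exact Rp|exact Bq]).
  clear p q. induction n as [|n IH]; intros p q Hn Rp Bq; [lia|].
  destruct (classic (exists z, (Bl z \/ Rd z) /\ Rmin p q < z < Rmax p q))
    as [[z [[Bz|Rz] Iz]]|Hnone].
  - destruct (IH p z) as [x [y (Rx & By & Ix & Iy & Hadj)]]; auto.
    + assert (cnt Bl (Rmin p z) (Rmax p z) < cnt Bl (Rmin p q) (Rmax p q))%nat
        by (apply (cnt_lt_subinterval Bl _ _ _ _ z); auto; rminmax).
      assert (cnt Rd (Rmin p z) (Rmax p z) <= cnt Rd (Rmin p q) (Rmax p q))%nat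
        by (apply cnt_le_subinterval; auto; rminmax).
      lia.
    + exists x, y. repeat split; auto; rminmax.
  - destruct (IH z q) as [x [y (Rx & By & Ix & Iy & Hadj)]]; auto.
    + assert (cnt Bl (Rmin z q) (Rmax z q) <= cnt Bl (Rmin p q) (Rmax p q))%nat
        by (apply cnt_le_subinterval; auto; rminmax).
      assert (cnt Rd (Rmin z q) (Rmax z q) < cnt Rd (Rmin p q) (Rmax p q))%nat
        by (apply (cnt_lt_subinterval Rd _ _ _ _ z); auto; rminmax).
      lia.
    + exists x, y. repeat split; auto; rminmax.
  - exists p, q. repeat split; auto; try rminmax.
    intros z Sz. destruct (Rle_dec z (Rmin p q)); auto.
    destruct (Rle_dec (Rmax p q) z); auto.
    exfalso. apply Hnone. exists z. split; [exact Sz|lra].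
Qed.

Lemma nested_matching_of_balanced k : forall Bl Rd b r,
  locally_finite Bl -> locally_finite Rd -> (forall z, Bl z -> Rd z -> False) ->
  Bl b -> Rd r ->
  count_in Rd (Rmin b r) (Rmax b r) k -> count_in Bl (Rmin b r) (Rmax b r) k ->
  exists M, is_matching Bl Rd M /\ nested Bl Rd M /\ M b = Some r.
Proof.
  induction k as [|k IH]; intros Bl Rd b r hB hR hdisj Bb Rr Cr Cb.
  - assert (hadj : adjacent Bl Rd r b).
    { intros z Sz. rewrite Rmin_comm, Rmax_comm.
      destruct (Rle_dec z (Rmin b r)); auto. destruct (Rle_dec (Rmax b r) z); auto.
      exfalso. destruct Sz as [Bz|Rz].
      - apply (count_in_0 _ _ _ _ Cb Bz). lra.
      - apply (count_in_0 _ _ _ _ Cr Rz). lra. }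
    exists (add_pair (fun _ => None) r b). split; [|split].
    + apply is_matching_add_pair; auto. apply is_matching_empty.
    + apply nested_add_pair; auto; [apply is_matching_empty|apply nested_empty].
    + apply add_pair_snd. intros ->. eauto.
  - destruct (count_in_S _ _ _ _ Cr) as [p [Rp Ip]].
    destruct (count_in_S _ _ _ _ Cb) as [q [Bq Iq]].
    destruct (exists_adjacent_pair Bl Rd p q hB hR Rp Bq) as [x [y (Rx & By & Ix & Iy & hadj)]].
    assert (Ix' : Rmin b r < x < Rmax b r) by rminmax.
    assert (Iy' : Rmin b r < y < Rmax b r) by rminmax.
    destruct (count_in_without Rd _ _ _ x Cr) as [mr [Cr' Er]].
    destruct (count_in_without Bl _ _ _ y Cb) as [mb [Cb' Eb]].
    assert (mr = k) by (specialize (Er Rx Ix'); lia).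
    assert (mb = k) by (specialize (Eb By Iy'); lia).
    subst mr mb.
    assert (Bb' : without Bl y b) by (split; [assumption|intros ->; rminmax]).
    assert (Rr' : without Rd x r) by (split; [assumption|intros ->; rminmax]).
    destruct (IH (without Bl y) (without Rd x) b r) as [M (hM & hN & Mb)]; auto;
      try apply locally_finite_without; auto.
    { intros z [Bz _] [Rz _]. eauto. }
    exists (add_pair M x y). split; [|split].
    + apply is_matching_add_pair; auto.
    + apply nested_add_pair; auto.
    + rewrite add_pair_other; auto; intros ->; [eauto|rminmax].
Qed.

Lemma Pset_iff_g_zero Bl Rd b r :
  locally_finite Bl -> locally_finite Rd -> (forall z, Bl z -> Rd z -> False) -> Bl b ->
  Pset Bl Rd b r <-> Rd r /\ g_val Bl Rd b r 0%Z.
Proof.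
  intros hB hR hdisj Bb. split.
  - intros [Rr [M (hM & hN & Mbr)]]. split; [exact Rr|].
    destruct (hR (Rmin b r) (Rmax b r)) as [nr Cr], (hB (Rmin b r) (Rmax b r)) as [nb Cb].
    exists nr, nb. split; [exact Cr|split; [exact Cb|]].
    rewrite (nested_segment_balanced Bl Rd M hM hN b r nr nb (or_introl Bb) Mbr Cr Cb).
    lia.
  - intros [Rr [nr [nb (Cr & Cb & E)]]]. split; [exact Rr|].
    assert (nr = nb) by lia. subst nr.
    exact (nested_matching_of_balanced nb Bl Rd b r hB hR hdisj Bb Rr Cr Cb).
Qed.

Lemma Pset_iff_height Bl Rd a b r :
  locally_finite Bl -> locally_finite Rd -> (forall z, Bl z -> Rd z -> False) -> Bl b ->
  a < b -> a < r ->
  Pset Bl Rd b r <-> Rd r /\ height Bl Rd a r = (height Bl Rd a b - 1)%Z.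
Proof.
  intros hB hR hdisj Bb hb hr.
  rewrite (Pset_iff_g_zero Bl Rd b r hB hR hdisj Bb), g_val_iff by assumption.
  split; intros [Rr E]; split; auto.
  - apply (gfun_blue_red_zero Bl Rd hB hR hdisj a b r); auto.
  - symmetry. apply (gfun_blue_red_zero Bl Rd hB hR hdisj a b r); auto.
Qed.

Lemma exists_lower_bound4 x y z w : exists a, a < x /\ a < y /\ a < z /\ a < w.
Proof. exists (Rmin (Rmin x y) (Rmin z w) - 1). repeat split; rminmax. Qed.

Theorem lemmaA5 (Bl Rd : R -> Prop)
  (hB : locally_finite Bl) (hR : locally_finite Rd)
  (hdisj : forall x, Bl x -> Rd x -> False) :
  (forall b, Bl b -> forall r, Pset Bl Rd b r <-> (Rd r /\ g_val Bl Rd b r 0%Z)) /\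
  (forall b1 b2, Bl b1 -> Bl b2 -> b1 <> b2 ->
     (exists r, Pset Bl Rd b1 r /\ Pset Bl Rd b2 r) ->
     (forall r, Pset Bl Rd b1 r <-> Pset Bl Rd b2 r) /\ g_val Bl Rd b1 b2 1%Z).
Proof.
  split; [intros b Bb r; exact (Pset_iff_g_zero Bl Rd b r hB hR hdisj Bb)|].
  intros b1 b2 B1 B2 ne [r [P1 P2]]. split.
  - intros r'. destruct (exists_lower_bound4 b1 b2 r r') as [a (h1 & h2 & h3 & h4)].
    apply (Pset_iff_height Bl Rd a b1 r hB hR hdisj B1 h1 h3) in P1 as [Rr E1].
    apply (Pset_iff_height Bl Rd a b2 r hB hR hdisj B2 h2 h3) in P2 as [_ E2].
    rewrite (Pset_iff_height Bl Rd a b1 r' hB hR hdisj B1 h1 h4),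
            (Pset_iff_height Bl Rd a b2 r' hB hR hdisj B2 h2 h4).
    split; intros [Rr' E]; split; auto; lia.
  - destruct (exists_lower_bound4 b1 b2 r r) as [a (h1 & h2 & h3 & _)].
    apply (Pset_iff_height Bl Rd a b1 r hB hR hdisj B1 h1 h3) in P1 as [_ E1].
    apply (Pset_iff_height Bl Rd a b2 r hB hR hdisj B2 h2 h3) in P2 as [_ E2].
    apply g_val_iff; auto. symmetry.
    apply (gfun_blue_blue_one Bl Rd hB hR hdisj a); auto. lia.
Qed.
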